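(* Let $p$ be a prime, $r\ge1$, and let $L$ be an even $\mathbb Z_p$-lattice which splits off $r$ hyperbolic planes, i.e. $L=U^r\oplus\tilde L$ for a hyperbolic plane $U$ over $\mathbb Z_p$ and an even $\mathbb Z_p$-lattice $\tilde L$. Let $\gamma\in D_L^r$ and let $M$ be a $\mathbb Z_p$-lattice with basis $(e_i)_{i=1,\dots,r}$ whose moment matrix $q((e_i)_i)$ lies in the class $q(\gamma)+\Lambda_r(\mathbb Z_p)$. Then there exists an isometric embedding $\phi:M\to L'$ with $(\phi(e_i))_{i=1,\dots,r}\in\gamma+L^r$.
   Context: A $\mathbb Z_p$-lattice is a free $\mathbb Z_p$-module of finite rank with a nondegenerate $\mathbb Q_p$-valued quadratic form $q$ and bilinear form $(x,y)=q(x+y)-q(x)-q(y)$; even means $q(L)\subseteq\mathbb Z_p$. $L'$ is the dual lattice and $D_L=L'/L$. A hyperbolic plane over $\mathbb Z_p$ has a basis $f,f'$ with $q(f)=q(f')=0$, $(f,f')=1$. For an $r$-tuple $\mathbf x=(x_1,\dots,x_r)$ its moment matrix is $q(\mathbf x)=\big((x_i,x_j)/2\big)_{i,j}$. $\Lambda_r(\mathbb Z_p)$ is the set of symmetric $r\times r$ matrices with diagonal entries in $\mathbb Z_p$ and off-diagonal entries in $\frac12\mathbb Z_p$; for $\gamma\in D_L^r$ the class $q(\gamma)+\Lambda_r(\mathbb Z_p)$ is $q(\tilde\gamma)+\Lambda_r(\mathbb Z_p)$ for any representative $\tilde\gamma\in L'^r$ (independent of the representative). *)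

From HB Require Import structures.
From mathcomp Require Import all_boot all_order all_algebra.
Set Implicit Arguments. Unset Strict Implicit. Unset Printing Implicit Defensive.
Import Order.TTheory GRing.Theory Num.Theory.
Local Open Scope ring_scope.

(* libraries.  We axiomatize a field K together with a subring Zp of  *)
(* K such that (K, Zp) is a model of (Q_p, Z_p): Zp is a valuation    *)
(* ring of K whose maximal ideal is p Zp, whose residue field is      *)
(* represented by 0,...,p-1, which is p-adically separated and       *)
(* complete.  These axioms characterize (Q_p, Z_p) up to unique       *)
(* isomorphism, so quantifying over all such models is the same as    *)
(* stating the result for Q_p.                                        *)
Record padic_model (p : nat) (K : fieldType) : Type := PadicModel {
  Zp : pred K;
  Zp1 : Zp 1;
  ZpB : forall x y, Zp x -> Zp y -> Zp (x - y);
  ZpM : forall x y, Zp x -> Zp y -> Zp (x * y);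
  Zp_valuation : forall x : K, Zp x \/ Zp x^-1;
  Zp_p_nonunit : ~ Zp (p%:R)^-1;
  Zp_local : forall x, Zp x -> ~ (exists y, Zp y /\ x = p%:R * y) -> Zp x^-1;
  Zp_residue : forall x, Zp x ->
    exists k : nat, (k < p)%N /\ exists y, Zp y /\ x = k%:R + p%:R * y;
  Zp_separated : forall x : K,
    (forall n : nat, exists y, Zp y /\ x = p%:R ^+ n * y) -> x = 0;
  Zp_complete : forall u : nat -> K, (forall k, Zp (u k)) ->
    (forall n : nat, exists N, forall m, (N <= m)%N ->
        exists y, Zp y /\ u m - u N = p%:R ^+ n * y) ->
    exists l : K, forall n : nat, exists N, forall m, (N <= m)%N ->
        exists y, Zp y /\ u m - l = p%:R ^+ n * y
}.

Section Lattices.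
Variables (p : nat) (K : fieldType) (S : padic_model p K).

(* A Z_p-lattice of rank n is modelled as Z_p^n inside K^n (row vectors)
   with bilinear form (x,y) = x G y^T, G its Gram matrix. *)
Definition bil (n : nat) (G : 'M[K]_n) (x y : 'rV[K]_n) : K := (x *m G *m y^T) 0 0.
Definition qf (n : nat) (G : 'M[K]_n) (x : 'rV[K]_n) : K := bil G x x / 2%:R.

Definition in_lattice (n : nat) (x : 'rV[K]_n) : Prop := forall j, Zp S (x 0 j).

Definition in_dual (n : nat) (G : 'M[K]_n) (x : 'rV[K]_n) : Prop :=
  forall y, in_lattice y -> Zp S (bil G x y).

Definition even_lattice (n : nat) (G : 'M[K]_n) : Prop :=
  forall x, in_lattice x -> Zp S (qf G x).

Definition moment (n r : nat) (G : 'M[K]_n) (X : 'M[K]_(r, n)) : 'M[K]_r :=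
  (2%:R)^-1 *: (X *m G *m X^T).

Definition in_Lambda (r : nat) (A : 'M[K]_r) : Prop :=
  A^T = A /\ (forall i, Zp S (A i i)) /\
  (forall i j, i != j -> Zp S (2%:R * A i j)).

(* L = U^r (+) L~ : there are f_1..f_r, f'_1..f'_r in L spanning r mutually
   orthogonal hyperbolic planes, and L is the orthogonal direct sum of their
   Z_p-span and its orthogonal complement L~ in L. *)
Definition splits_hyperbolic (n : nat) (G : 'M[K]_n) (r : nat) : Prop :=
  exists f f' : 'M[K]_(r, n),
    (forall i, in_lattice (row i f) /\ in_lattice (row i f')) /\
    f *m G *m f^T = 0 /\ f' *m G *m f'^T = 0 /\ f *m G *m f'^T = 1%:M /\
    forall x, in_lattice x ->
      exists (a c : 'rV[K]_r) (y : 'rV[K]_n),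
        (forall i, Zp S (a 0 i) /\ Zp S (c 0 i)) /\
        in_lattice y /\ y *m G *m f^T = 0 /\ y *m G *m f'^T = 0 /\
        x = a *m f + c *m f' + y.

End Lattices.

From Pilot Require Import Defs.
From HB Require Import structures.
From mathcomp Require Import all_boot all_order all_algebra.
From mathcomp Require Import ring.
Set Implicit Arguments. Unset Strict Implicit. Unset Printing Implicit Defensive.
Import Order.TTheory GRing.Theory Num.Theory.
Local Open Scope ring_scope.

(* Write the r vectors as the rows of matrices and put
   gram U V := U G V^T, so that the moment matrix of X is gram X X / 2.
   Let f, f' be the rows spanning the r hyperbolic planes, h := gram g f,
   h' := gram g f' and B := 1 - h.  For every r x r matrix A the shifted
   tuple  X := g + A f + B f'  satisfies
       gram X X = gram g g + C + C^T,   C := A + h' B^T,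
   because f, f' are isotropic and dual to each other.  Since
   D := T - moment g lies in Lambda_r(Z_p), 2D = C + C^T for an integral
   C (take 2 D_ij above the diagonal and D_ii on it), so A := C - h' B^T
   gives moment X = T.  An even lattice is integral, hence L is contained
   in L'; so h, h' and A, B are integral, X - g lies in L^r and X lies in
   L'^r.  Finally gram X X = 2T is invertible, so the rows of X are free. *)

Section PadicIntegers.
Variables (p : nat) (K : fieldType) (S : padic_model p K).

(* Membership in Z_p (the name Zp alone denotes Z/pZ in the libraries). *)
Local Notation isZp := (Defs.Zp S).

Lemma Zp_0 : isZp 0.
Proof. by rewrite -(subrr (1 : K)); apply: Defs.ZpB; apply: Defs.Zp1. Qed.

Lemma Zp_opp x : isZp x -> isZp (- x).
Proof. by move=> Zx; rewrite -sub0r; apply: Defs.ZpB => //; apply: Zp_0. Qed.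

Lemma Zp_add x y : isZp x -> isZp y -> isZp (x + y).
Proof. by move=> Zx Zy; rewrite -(opprK y); apply: Defs.ZpB => //; apply: Zp_opp. Qed.

Lemma Zp_sum (I : Type) (s : seq I) (P : pred I) (F : I -> K) :
  (forall i, P i -> isZp (F i)) -> isZp (\sum_(i <- s | P i) F i).
Proof. by move=> ZF; apply: (big_ind isZp) => //; [apply: Zp_0 | apply: Zp_add]. Qed.

Lemma Zp_nat k : isZp k%:R.
Proof.
by elim: k => [|k IHk]; [apply: Zp_0 | rewrite mulrS; apply: Zp_add => //; apply: Defs.Zp1].
Qed.

(* K has characteristic different from 2: otherwise p%:R would be 0 or 1,
   and 1/p would be a p-adic integer. *)
Lemma two_neq0 : (2%:R : K) != 0.
Proof.
apply/negP => /eqP two0; apply: (@Zp_p_nonunit p K S).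
have -> : p%:R = (odd p)%:R :> K.
  by rewrite {1}(divn_eq p 2) natrD natrM two0 mulr0 add0r modn2.
by case: (odd p); rewrite ?invr1 ?invr0; [apply: Defs.Zp1 | apply: Zp_0].
Qed.

Definition integral_mx m k (M : 'M[K]_(m, k)) : Prop := forall i j, isZp (M i j).

Lemma integral_mxD m k (M N : 'M[K]_(m, k)) :
  integral_mx M -> integral_mx N -> integral_mx (M + N).
Proof. by move=> ZM ZN i j; rewrite mxE; apply: Zp_add. Qed.

Lemma integral_mxN m k (M : 'M[K]_(m, k)) : integral_mx M -> integral_mx (- M).
Proof. by move=> ZM i j; rewrite mxE; apply: Zp_opp. Qed.

Lemma integral_mxB m k (M N : 'M[K]_(m, k)) :
  integral_mx M -> integral_mx N -> integral_mx (M - N).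
Proof. by move=> ZM ZN; apply: integral_mxD => //; apply: integral_mxN. Qed.

Lemma integral_mxM m k l (M : 'M[K]_(m, k)) (N : 'M[K]_(k, l)) :
  integral_mx M -> integral_mx N -> integral_mx (M *m N).
Proof. by move=> ZM ZN i j; rewrite mxE; apply: Zp_sum => k' _; apply: Defs.ZpM. Qed.

Lemma integral_mxT m k (M : 'M[K]_(m, k)) : integral_mx M -> integral_mx M^T.
Proof. by move=> ZM i j; rewrite mxE. Qed.

Lemma integral_mx1 m : integral_mx (1%:M : 'M[K]_m).
Proof. by move=> i j; rewrite mxE; apply: Zp_nat. Qed.

Lemma integral_mx_rows m k (M : 'M[K]_(m, k)) :
  integral_mx M <-> forall i, in_lattice S (row i M).
Proof.
by split=> [ZM i j | ZM i j]; [rewrite mxE | have := ZM i j; rewrite mxE].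
Qed.

(* Twice an element of Lambda_r(Z_p) is C + C^T for an integral C: put
   2 D_ij above the diagonal, D_ii on it and 0 below. *)
Lemma Lambda_double_split r (D : 'M[K]_r) :
  in_Lambda S D -> exists C, integral_mx C /\ C + C^T = 2%:R *: D.
Proof.
move=> [D_sym [D_diag D_off]].
exists (\matrix_(i, j) if (i < j)%N then 2%:R * D i j else if i == j then D i i else 0).
split=> [i j | ]; first rewrite mxE.
  case: ltnP => [lt_ij | _]; first by apply: D_off; rewrite neq_ltn lt_ij.
  by case: eqP => _; [apply: D_diag | apply: Zp_0].
apply/matrixP => i j; rewrite !mxE.
case: (ltngtP i j) => [lt_ij | lt_ji | /val_inj eq_ij].
- by rewrite -val_eqE (gtn_eqF lt_ij) addr0.
- by rewrite -val_eqE (gtn_eqF lt_ji) add0r -[in LHS]D_sym mxE.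
- by rewrite eq_ij eqxx mulr_natl mulr2n.
Qed.

Section Form.
Variables (n : nat) (G : 'M[K]_n).
Hypothesis G_sym : G^T = G.

Definition gram a b (U : 'M[K]_(a, n)) (V : 'M[K]_(b, n)) : 'M[K]_(a, b) :=
  U *m G *m V^T.

Lemma momentE m (U : 'M[K]_(m, n)) : moment G U = (2%:R)^-1 *: gram U U.
Proof. by []. Qed.

Lemma gramDl a b (U1 U2 : 'M[K]_(a, n)) (V : 'M[K]_(b, n)) :
  gram (U1 + U2) V = gram U1 V + gram U2 V.
Proof. by rewrite /gram !mulmxDl. Qed.

Lemma gramDr a b (U : 'M[K]_(a, n)) (V1 V2 : 'M[K]_(b, n)) :
  gram U (V1 + V2) = gram U V1 + gram U V2.
Proof. by rewrite /gram linearD mulmxDr. Qed.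

Lemma gramMl a b c (M : 'M[K]_(c, a)) (U : 'M[K]_(a, n)) (V : 'M[K]_(b, n)) :
  gram (M *m U) V = M *m gram U V.
Proof. by rewrite /gram !mulmxA. Qed.

Lemma gramMr a b c (M : 'M[K]_(c, b)) (U : 'M[K]_(a, n)) (V : 'M[K]_(b, n)) :
  gram U (M *m V) = gram U V *m M^T.
Proof. by rewrite /gram trmx_mul !mulmxA. Qed.

Lemma gramC a b (U : 'M[K]_(a, n)) (V : 'M[K]_(b, n)) : (gram U V)^T = gram V U.
Proof. by rewrite /gram !trmx_mul trmxK G_sym mulmxA. Qed.

Lemma gram_entry a b (U : 'M[K]_(a, n)) (V : 'M[K]_(b, n)) i j :
  gram U V i j = bil G (row i U) (row j V).
Proof.
rewrite /bil /gram -row_mul; set W := U *m G.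
by rewrite !mxE; apply: eq_bigr => k _; rewrite !mxE.
Qed.

Lemma bilC x y : bil G x y = bil G y x.
Proof.
have -> : bil G x y = (x *m G *m y^T)^T 0 0 by rewrite mxE.
by rewrite !trmx_mul trmxK G_sym mulmxA.
Qed.

Lemma bilDl x1 x2 y : bil G (x1 + x2) y = bil G x1 y + bil G x2 y.
Proof. by rewrite /bil !mulmxDl [in LHS]mxE. Qed.

Lemma bilDr x y1 y2 : bil G x (y1 + y2) = bil G x y1 + bil G x y2.
Proof. by rewrite /bil linearD /= mulmxDr [in LHS]mxE. Qed.

(* An even lattice is integral: (x, y) = q(x + y) - q(x) - q(y). *)
Lemma even_bil_integral x y :
  even_lattice S G -> in_lattice S x -> in_lattice S y -> isZp (bil G x y).
Proof.
move=> G_even Zx Zy.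
have Zxy : in_lattice S (x + y) by move=> j; rewrite mxE; apply: Zp_add.
have -> : bil G x y = qf G (x + y) - qf G x - qf G y.
  rewrite /qf !(bilDl, bilDr) (bilC y x).
  by field; apply: two_neq0.
by apply: Defs.ZpB; [apply: Defs.ZpB|]; apply: G_even.
Qed.

Definition dual_mx m (U : 'M[K]_(m, n)) : Prop := forall i, in_dual S G (row i U).

Lemma dual_mxP m (U : 'M[K]_(m, n)) :
  dual_mx U <-> forall k (V : 'M[K]_(k, n)), integral_mx V -> integral_mx (gram U V).
Proof.
split=> [U_dual k V /integral_mx_rows ZV i j | U_gram i y Zy].
  by rewrite gram_entry; apply: U_dual.
have /integral_mx_rows Zy1 : forall i : 'I_1, in_lattice S (row i y).
  by move=> i0; rewrite row_id.
by have := U_gram _ _ Zy1 i 0; rewrite gram_entry row_id.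
Qed.

Lemma dual_mxD m (U V : 'M[K]_(m, n)) : dual_mx U -> dual_mx V -> dual_mx (U + V).
Proof.
move=> /dual_mxP U_dual /dual_mxP V_dual; apply/dual_mxP => k W ZW.
by rewrite gramDl; apply: integral_mxD; [apply: U_dual | apply: V_dual].
Qed.

Lemma dual_mxM m k (M : 'M[K]_(m, k)) (U : 'M[K]_(k, n)) :
  integral_mx M -> dual_mx U -> dual_mx (M *m U).
Proof.
move=> ZM /dual_mxP U_dual; apply/dual_mxP => l W ZW.
by rewrite gramMl; apply: integral_mxM => //; apply: U_dual.
Qed.

Lemma lattice_dual m (U : 'M[K]_(m, n)) :
  even_lattice S G -> integral_mx U -> dual_mx U.
Proof.
by move=> G_even /integral_mx_rows ZU i y Zy; apply: even_bil_integral.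
Qed.

Definition hyperbolic_shift r (g f f' : 'M[K]_(r, n)) (A : 'M[K]_r) : 'M[K]_(r, n) :=
  g + A *m f + (1%:M - gram g f) *m f'.

Lemma hyperbolic_shift_gram r (g f f' : 'M[K]_(r, n)) (A : 'M[K]_r) :
  gram f f = 0 -> gram f' f' = 0 -> gram f f' = 1%:M ->
  let C := A + gram g f' *m (1%:M - gram g f)^T in
  gram (hyperbolic_shift g f f' A) (hyperbolic_shift g f f' A)
    = gram g g + C + C^T.
Proof.
move=> ff f'f' ff' C.
have f'f : gram f' f = 1%:M by rewrite -gramC ff' trmx1.
rewrite /C /hyperbolic_shift !gramDl !gramDr !gramMl !gramMr.
rewrite ff f'f' ff' f'f -(gramC g f) -(gramC g f') !mul0mx !mulmx0 !mul1mx !addr0.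
move: (gram g g) (gram g f) (gram g f') => gg h h'.
rewrite !linearD /= !linearN /= !trmx_mul !trmxK trmx1.
rewrite ?mulmxBl ?mulmxN ?mulNmx ?mulmx1 ?mul1mx.
move: (h *m A^T) (A *m h^T) (h' *m h^T) (h *m h'^T) => hA Ah h'h hh'.
by apply/matrixP => i j; rewrite !mxE; ring.
Qed.

Lemma row_free_of_gram_unit m (U : 'M[K]_(m, n)) :
  gram U U \in unitmx -> row_free U.
Proof.
move=> U_unit; rewrite /row_free eqn_leq rank_leq_row -{1}(mxrank_unit U_unit).
exact: leq_trans (mxrankM_maxl _ _) (mxrankM_maxl _ _).
Qed.

End Form.
End PadicIntegers.

Theorem mainTheorem5 (p : nat) (K : fieldType) (S : padic_model p K)
  (n r : nat) (G : 'M[K]_n) (g : 'M[K]_(r, n)) (T : 'M[K]_r) :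
  prime p -> (0 < r)%N ->
  (* L = Z_p^n with symmetric nondegenerate Gram matrix G, even *)
  G^T = G -> G \in unitmx -> even_lattice S G ->
  splits_hyperbolic S G r ->
  (* gamma in D_L^r, represented by the rows of g, which lie in L' *)
  (forall i, in_dual S G (row i g)) ->
  (* M : lattice with basis e_1..e_r, moment matrix T (nondegenerate) *)
  T^T = T -> T \in unitmx ->
  in_Lambda S (T - moment G g) ->
  exists X : 'M[K]_(r, n),
    (forall i, in_dual S G (row i X)) /\
    (forall i, in_lattice S (row i X - row i g)) /\
    moment G X = T /\ row_free X.
Proof.
move=> _ _ G_sym _ G_even [f [f' [f_in [ff [f'f' [ff' _]]]]]] g_dual _ T_unit D_Lambda.
have [C [C_int C_sum]] := Lambda_double_split D_Lambda.
have f_int : integral_mx S f by apply/integral_mx_rows => i; case: (f_in i).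
have f'_int : integral_mx S f' by apply/integral_mx_rows => i; case: (f_in i).
have /dual_mxP g_gram := g_dual.
pose B := 1%:M - gram G g f.
pose A := C - gram G g f' *m B^T.
pose X := hyperbolic_shift G g f f' A.
have B_int : integral_mx S B by apply: integral_mxB; [apply: integral_mx1 | apply: g_gram].
have A_int : integral_mx S A.
  by apply: integral_mxB => //; apply: integral_mxM; [apply: g_gram | apply: integral_mxT].
have half_two : (2%:R : K)^-1 * 2%:R = 1 by apply: mulVf; apply: (two_neq0 S).
have X_gram : gram G X X = 2%:R *: T.
  rewrite hyperbolic_shift_gram // subrK -addrA C_sum scalerBr momentE scalerA.
  by rewrite mulrC half_two scale1r addrC subrK.
exists X; split; [|split; [|split]].
- apply: dual_mxD; first apply: dual_mxD => //.
  + by apply: dual_mxM => //; apply: lattice_dual.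
  + by apply: dual_mxM => //; apply: lattice_dual.
- have X_g : X - g = A *m f + B *m f' by rewrite addrAC [g + _ - g]addrAC subrr add0r.
  have /integral_mx_rows X_g_int : integral_mx S (X - g).
    by rewrite X_g; apply: integral_mxD; apply: integral_mxM.
  by move=> i; rewrite -linearB; apply: X_g_int.
- by rewrite momentE X_gram scalerA half_two scale1r.
- by apply: (@row_free_of_gram_unit _ _ G); rewrite X_gram unitmxZ // unitfE (two_neq0 S).
Qed.
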